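(* Let $\mathcal{G}=(V,L)$ be a finite connected undirected graph with monitor set $M$ and non-monitor set $N=V\setminus M$, $\sigma=|N|$, with measurement paths given by Controllable Simple-path Probing (CSP). A set $S\subseteq N$ is $(\sigma-1)$-identifiable if and only if either (i) every node in $S$ is adjacent to at least two monitors, or (ii) there is a node $v\in S$ such that every node in $N\setminus\{v\}$ is adjacent to at least two monitors and $v$ is adjacent to all nodes of $N\setminus\{v\}$ and to one monitor.
   Context: Under CSP, the measurement paths $P$ are all simple paths (no repeated nodes) in $\mathcal{G}$ between two distinct monitors. A failure set is any $F\subseteq N$; a path fails iff it traverses a node of $F$. $P_F$ is the set of paths in $P$ traversing a node of $F$; $F_1,F_2$ distinguishable iff $P_{F_1}\ne P_{F_2}$. $S\subseteq N$ is $k$-identifiable if any two failure sets $F_1,F_2$ with $|F_1|,|F_2|\le k$ and $F_1\cap S\ne F_2\cap S$ are distinguishable. *)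

From mathcomp Require Import all_boot.
Set Implicit Arguments. Unset Strict Implicit. Unset Printing Implicit Defensive.

Section Defs.
Variables (V : finType) (e : rel V) (M : {set V}).

Definition nonmon : {set V} := ~: M.

Definition csp_path (p : seq V) : Prop :=
  exists x s, p = x :: s /\ path e x s /\ uniq p /\
    x \in M /\ last x s \in M /\ x != last x s.

Definition fails (F : {set V}) (p : seq V) : bool := has (mem F) p.

(* F1, F2 distinguishable iff P_F1 <> P_F2 *)
Definition distinguishable (F1 F2 : {set V}) : Prop :=
  exists p, csp_path p /\ fails F1 p <> fails F2 p.

Definition k_identifiable (k : nat) (S : {set V}) : Prop :=
  forall F1 F2 : {set V}, F1 \subset nonmon -> F2 \subset nonmon ->
    #|F1| <= k -> #|F2| <= k -> F1 :&: S != F2 :&: S ->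
    distinguishable F1 F2.

Definition nmon_adj (w : V) : nat := #|[set m in M | e w m]|.

End Defs.

From mathcomp Require Import all_boot.
Set Implicit Arguments. Unset Strict Implicit. Unset Printing Implicit Defensive.

(* A simple path through a non-monitor v enters and leaves it through two
   distinct neighbours.  If the path survives the failure of every other
   non-monitor, both neighbours are monitors, so v has two monitor
   neighbours; conversely such a v separates any two failure sets that
   differ at v, by the path m v m'.
   Necessity: if v in S has fewer than two monitor neighbours, separating
   N\{w} from N\{v} forces w to have two, and separating N\{u} from
   N\{u,v} needs a working path whose only non-monitors are u and v, which
   forces the edge vu.  Sufficiency in case (ii): a failure set of size at
   most sigma-1 containing v misses some u <> v; either u separates it from
   a set agreeing with it off v, or the path m v u m' does. *)

Lemma set_neq_witness (T : finType) (A B : {set T}) :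
  A != B -> exists x, (x \in A) != (x \in B).
Proof.
move=> AB; apply/existsP; apply: contraNT AB => /existsPn same.
by apply/eqP/setP => x; apply/eqP/negPn/same.
Qed.

Lemma card_setD1_le (T : finType) (A : {set T}) x : x \in A -> #|A :\ x| <= #|A| - 1.
Proof. by move=> xA; rewrite [in X in _ <= X](cardsD1 x A) xA add1n subn1. Qed.

Lemma connect_neq_nbr (T : finType) (r : rel T) x y :
  connect r x y -> x != y -> exists z, r x z.
Proof.
case/connectP => [[|z p]] /= => [_ ->|/andP [xz _] _]; first by rewrite eqxx.
by exists z.
Qed.

Section CSP.
Variables (V : finType) (e : rel V) (M : {set V}).
Hypothesis e_sym : symmetric e.
Hypothesis e_irr : irreflexive e.

Local Notation N := (nonmon M).
Local Notation csp_path := (csp_path e M).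
Local Notation distinguishable := (distinguishable e M).
Local Notation nmon_adj := (nmon_adj e M).

Lemma in_nonmon x : (x \in N) = (x \notin M).
Proof. by rewrite inE. Qed.

Lemma nonmon_subset_notin (F : {set V}) m : F \subset N -> m \in M -> m \notin F.
Proof. by move=> /subsetP FN mM; apply: contraL mM => /FN; rewrite in_nonmon. Qed.

Lemma nmon_adj_gt0 v m : m \in M -> e v m -> 0 < nmon_adj v.
Proof. by move=> mM vm; apply/card_gt0P; exists m; rewrite inE mM vm. Qed.

Lemma nmon_adj_ge2 v a b : a \in M -> b \in M -> a != b -> e v a -> e v b ->
  2 <= nmon_adj v.
Proof. by move=> aM bM ab va vb; apply/card_gt1P; exists a, b; rewrite !inE aM bM va vb. Qed.

Lemma distinguishable_sym F1 F2 : distinguishable F1 F2 -> distinguishable F2 F1.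
Proof. by case=> p [cp d]; exists p; split=> // /esym. Qed.

Lemma csp_path3 m v m' : m \in M -> m' \in M -> m != m' -> v \notin M ->
  e v m -> e v m' -> csp_path [:: m; v; m'].
Proof.
move=> mM m'M mm' vM vm vm'; exists m, [:: v; m']; split=> //=.
have mv : m != v by apply: contraNneq vM => <-.
have vm'' : v != m' by apply: contraNneq vM => ->.
by rewrite e_sym vm vm' !inE mM m'M mm' vm'' !negb_or mv mm'.
Qed.

Lemma csp_path4 m v u m' : m \in M -> m' \in M -> m != m' -> v \notin M ->
  u \notin M -> v != u -> e v m -> e v u -> e u m' -> csp_path [:: m; v; u; m'].
Proof.
move=> mM m'M mm' vM uM vu vm vu' um'; exists m, [:: v; u; m']; split=> //=.
have mv : m != v by apply: contraNneq vM => <-.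
have mu : m != u by apply: contraNneq uM => <-.
have vm'' : v != m' by apply: contraNneq vM => ->.
have um'' : u != m' by apply: contraNneq uM => ->.
by rewrite e_sym vm vu' um' !inE mM m'M mm' /= !negb_or mv mu mm' vu vm'' um''.
Qed.

Lemma csp_path_nbrs p v : csp_path p -> v \in p -> v \notin M ->
  exists a b, [/\ a \in p, b \in p, a != b, e v a & e v b].
Proof.
case=> x [s [-> [pth [un [xM [lM _]]]]]] vp vM.
have vx : v != x by apply: contraNneq vM => ->.
move: vp; rewrite inE (negPf vx) /= => vs.
case/splitPr: vs pth un lM => s1 s2.
rewrite -cat_cons cat_path last_cat cat_uniq => /andP [_ p2] /and3P [_ /hasPn nb _].
case: s2 p2 nb => [|b s2] /= => [_ _ lM|/and3P [av vb _] nb _]; first by rewrite lM in vM.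
have bs1 : b \notin x :: s1 by apply: nb; rewrite !inE eqxx orbT.
exists (last x s1), b; split.
- by rewrite -cat_cons mem_cat mem_last.
- by rewrite -cat_cons mem_cat !inE eqxx !orbT.
- by apply: contraNneq bs1 => <-; exact: mem_last.
- by rewrite e_sym av.
- exact: vb.
Qed.

Lemma csp_path_nbr_cases p v u : csp_path p -> v \in p -> v \notin M ->
  (forall c, c \in p -> e v c -> c \notin M -> c = u) ->
  2 <= nmon_adj v \/ e v u /\ 0 < nmon_adj v.
Proof.
move=> cp vp vM only_u.
have [a [b [ap bp ab va vb]]] := csp_path_nbrs cp vp vM.
have [aM|/(only_u _ ap va) au] := boolP (a \in M);
  have [bM|/(only_u _ bp vb) bu] := boolP (b \in M).
- by left; exact: (nmon_adj_ge2 aM bM ab).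
- by right; rewrite -bu; split=> //; exact: (nmon_adj_gt0 aM).
- by right; rewrite -au; split=> //; exact: (nmon_adj_gt0 bM).
- by rewrite au bu eqxx in ab.
Qed.

Lemma nonmon_on_path A p c : ~~ fails (N :\: A) p -> c \in p -> c \notin M -> c \in A.
Proof.
move=> /hasPn avoid cp cM.
by move: (avoid c cp); rewrite -topredE /= !inE cM andbT negbK.
Qed.

Lemma fails_setD1_mem p v w : ~~ fails (N :\ v) p -> fails (N :\ w) p -> v \in p.
Proof.
move=> avoid /hasP [z zp]; rewrite !inE => /andP [_ zM].
by have := nonmon_on_path avoid zp zM; rewrite inE => /eqP <-.
Qed.

Lemma csp_path_isolated_ge2 p v : csp_path p -> v \in p -> v \notin M ->
  ~~ fails (N :\ v) p -> 2 <= nmon_adj v.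
Proof.
move=> cp vp vM avoid.
have only_v c : c \in p -> e v c -> c \notin M -> c = v.
  by move=> cp' _ /(nonmon_on_path avoid cp'); rewrite inE => /eqP.
by case: (csp_path_nbr_cases cp vp vM only_v) => [//|[]]; rewrite e_irr.
Qed.

Lemma distinguishable_setD1 v w : v \notin M -> w \notin M ->
  distinguishable (N :\ w) (N :\ v) -> 2 <= nmon_adj v \/ 2 <= nmon_adj w.
Proof.
move=> vM wM [p [cp]].
case: (boolP (fails (N :\ w) p)) => [fw|nfw]; case: (boolP (fails (N :\ v) p)) => [fv|nfv] // _.
- by left; apply: csp_path_isolated_ge2 cp (fails_setD1_mem nfv fw) vM nfv.
- by right; apply: csp_path_isolated_ge2 cp (fails_setD1_mem nfw fv) wM nfw.
Qed.

Lemma distinguishable_setD2 v u : v \notin M -> u != v ->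
  distinguishable (N :\ u) (N :\: [set u; v]) ->
  2 <= nmon_adj v \/ e v u /\ 0 < nmon_adj v.
Proof.
move=> vM uv [p [cp]].
have sub : N :\: [set u; v] \subset N :\ u by apply: setDS; rewrite sub1set !inE eqxx.
have mono : fails (N :\: [set u; v]) p -> fails (N :\ u) p.
  by apply: sub_has => x; exact: (subsetP sub x).
case: (boolP (fails (N :\: [set u; v]) p)) => [/mono -> //|nfuv].
case: (boolP (fails (N :\ u) p)) => // fu _.
have vp : v \in p.
  case/hasP: fu => z zp; rewrite !inE => /andP [zu zM].
  by move: (nonmon_on_path nfuv zp zM); rewrite !inE (negPf zu) => /eqP <-.
apply: csp_path_nbr_cases cp vp vM _ => c cp' vc cM.
move: (nonmon_on_path nfuv cp' cM); rewrite !inE => /orP [/eqP //|/eqP cv].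
by rewrite cv e_irr in vc.
Qed.

Lemma mem_nonmon_of_diff (F1 F2 : {set V}) x : F1 \subset N -> F2 \subset N ->
  (x \in F1) != (x \in F2) -> x \in N.
Proof.
move=> s1 s2; case: (boolP (x \in F1)) => [/(subsetP s1) //|_].
by rewrite eq_sym eqbF_neg negbK => /(subsetP s2).
Qed.

Lemma distinguishable_by_node (F1 F2 : {set V}) w : F1 \subset N -> F2 \subset N ->
  2 <= nmon_adj w -> (w \in F1) != (w \in F2) -> distinguishable F1 F2.
Proof.
move=> s1 s2 /card_gt1P [a [b [+ + ab]]]; rewrite !inE => /andP [aM wa] /andP [bM wb] d.
have wM : w \notin M by rewrite -in_nonmon (mem_nonmon_of_diff s1 s2 d).
exists [:: a; w; b]; split; first exact: csp_path3.
by rewrite /fails /= !(negPf (nonmon_subset_notin _ aM), negPf (nonmon_subset_notin _ bM))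
  // /= !orbF; apply/eqP.
Qed.

Lemma distinguishable_by_edge (F1 F2 : {set V}) v u : F1 \subset N -> F2 \subset N ->
  v \in F1 -> v \notin F2 -> u \notin F1 -> u \notin F2 -> u \notin M ->
  e v u -> 0 < nmon_adj v -> 2 <= nmon_adj u -> distinguishable F1 F2.
Proof.
move=> s1 s2 vF1 vF2 uF1 uF2 uM vu.
case/card_gt0P => m; rewrite inE => /andP [mM vm].
case/card_gt1P => a [b [+ + ab]]; rewrite !inE => /andP [aM ua] /andP [bM ub].
have [m' [m'M um' mm']] : exists m', [/\ m' \in M, e u m' & m != m'].
  by case: (eqVneq m a) => [ma|]; [exists b; rewrite ma | exists a].
have vM : v \notin M by rewrite -in_nonmon (subsetP s1).
have vu' : v != u by apply: contraNneq uF1 => <-.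
exists [:: m; v; u; m']; split; first exact: csp_path4.
by rewrite /fails /= vF1 orbT (negPf vF2) (negPf uF2)
  (negPf (nonmon_subset_notin _ mM)) // (negPf (nonmon_subset_notin _ m'M)).
Qed.

Lemma identifiable_all_ge2 k (S : {set V}) :
  {in S, forall v, 2 <= nmon_adj v} -> k_identifiable e M k S.
Proof.
move=> ge2 F1 F2 s1 s2 _ _ /set_neq_witness [x]; rewrite !inE.
case: (boolP (x \in S)) => xS; rewrite ?andbT ?andbF // => d.
exact: distinguishable_by_node s1 s2 (ge2 x xS) d.
Qed.

Section Hub.
Variable v : V.
Hypothesis adj_v : 0 < nmon_adj v.
Hypothesis ge2 : {in N :\ v, forall w, 2 <= nmon_adj w}.
Hypothesis hub : {in N :\ v, forall w, e v w}.

Lemma distinguishable_hub (F1 F2 : {set V}) : F1 \subset N -> F2 \subset N ->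
  #|F1| <= #|N| - 1 -> v \in F1 -> v \notin F2 -> distinguishable F1 F2.
Proof.
move=> s1 s2 cF1 vF1 vF2.
have [u uN uF1] : exists2 u, u \in N & u \notin F1.
  apply/subsetPn; apply: contraTN cF1 => /subset_leq_card NF1.
  rewrite -ltnNge (leq_trans _ NF1) // subn1 ltn_predL.
  by apply/card_gt0P; exists v; exact: (subsetP s1).
have uv : u != v by apply: contraNneq uF1 => ->.
have uNv : u \in N :\ v by rewrite in_setD1 uv uN.
have [uF2|uF2] := boolP (u \in F2).
  by apply: (distinguishable_by_node s1 s2 (ge2 uNv)); rewrite uF2 (negPf uF1).
apply: distinguishable_by_edge s1 s2 vF1 vF2 uF1 uF2 _ (hub uNv) adj_v (ge2 uNv).
by rewrite -in_nonmon.
Qed.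

Lemma identifiable_hub (S : {set V}) : k_identifiable e M (#|N| - 1) S.
Proof.
move=> F1 F2 s1 s2 c1 c2 neqS.
have [x d] : exists x, (x \in F1) != (x \in F2).
  by apply: set_neq_witness; apply: contraNneq neqS => ->.
have xN := mem_nonmon_of_diff s1 s2 d.
have [xv|xv] := eqVneq x v; last first.
  by apply: (distinguishable_by_node s1 s2 _ d); apply: ge2; rewrite in_setD1 xv xN.
move: d; rewrite {x xN}xv.
case: (boolP (v \in F1)) => vF1; case: (boolP (v \in F2)) => vF2 // _.
  exact: distinguishable_hub.
exact/distinguishable_sym/distinguishable_hub.
Qed.

End Hub.

Section Necessity.
Variable S : {set V}.
Hypothesis SN : S \subset N.
Hypothesis ident : k_identifiable e M (#|N| - 1) S.

Lemma identifiable_setD1 v w : v \in S -> w \in N :\ v ->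
  2 <= nmon_adj v \/ 2 <= nmon_adj w.
Proof.
move=> vS /setD1P [wv wN].
have vN := subsetP SN v vS.
apply: distinguishable_setD1; rewrite -?in_nonmon //.
apply: ident; rewrite ?subsetDl ?card_setD1_le //.
apply: contraTneq vS => /setP /(_ v).
by rewrite !in_setI !in_setD1 vN eqxx eq_sym wv /= => ->.
Qed.

Lemma identifiable_setD2 v u : v \in S -> u \in N :\ v ->
  2 <= nmon_adj v \/ e v u /\ 0 < nmon_adj v.
Proof.
move=> vS /setD1P [uv uN].
have vN := subsetP SN v vS.
have sub : N :\: [set u; v] \subset N :\ u by apply: setDS; rewrite sub1set !inE eqxx.
apply: distinguishable_setD2; rewrite -?in_nonmon //.
apply: ident; rewrite ?subsetDl ?card_setD1_le //.
- exact: leq_trans (subset_leq_card sub) (card_setD1_le uN).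
- apply: contraTneq vS => /setP /(_ v).
  by rewrite !in_setI in_setD1 in_setD in_set2 eqxx orbT eq_sym uv vN /= => ->.
Qed.

Lemma identifiable_lonely_nbrs v : v \in S -> nmon_adj v < 2 ->
  {in N :\ v, forall w, 2 <= nmon_adj w /\ e v w}.
Proof.
move=> vS lt2 w wN; have not_ge2 : 2 <= nmon_adj v = false by rewrite leqNgt lt2.
split.
- by case: (identifiable_setD1 vS wN); rewrite ?not_ge2.
- by case: (identifiable_setD2 vS wN) => [|[]]; rewrite ?not_ge2.
Qed.

Lemma identifiable_lonely_gt0 v m : v \in S -> nmon_adj v < 2 ->
  m \in M -> connect e v m -> 0 < nmon_adj v.
Proof.
move=> vS lt2 mM conn_vm.
have vM : v \notin M by rewrite -in_nonmon (subsetP SN).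
have vm : v != m by apply: contraNneq vM => ->.
have [u vu] := connect_neq_nbr conn_vm vm.
have [uM|uM] := boolP (u \in M); first exact: nmon_adj_gt0 uM vu.
have uN : u \in N :\ v.
  by rewrite in_setD1 in_nonmon uM andbT; apply: contraTneq vu => ->; rewrite e_irr.
by case: (identifiable_setD2 vS uN) => [ge2|[]//]; rewrite ltnNge ge2 in lt2.
Qed.

End Necessity.
End CSP.

Theorem proposition4 (V : finType) (e : rel V) (M : {set V})
  (e_sym : symmetric e) (e_irr : irreflexive e)
  (e_conn : forall x y : V, connect e x y)
  (M2 : 2 <= #|M|)
  (S : {set V}) (HS : S \subset nonmon M) :
  k_identifiable e M (#|nonmon M| - 1) S <->
  ((forall v, v \in S -> 2 <= nmon_adj e M v) \/
   (exists2 v, v \in S &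
      [/\ forall w, w \in nonmon M :\ v -> 2 <= nmon_adj e M w,
          forall w, w \in nonmon M :\ v -> e v w
        & nmon_adj e M v = 1])).
Proof.
split=> [ident|[ge2|[v vS [ge2 hub adj_v]]]]; last 2 first.
- exact: identifiable_all_ge2 e_sym _ _ ge2.
- by apply: (identifiable_hub e_sym _ ge2 hub); rewrite adj_v.
have [ge2|] := boolP [forall v in S, 2 <= nmon_adj e M v]; first by left; exact/forall_inP.
rewrite negb_forall_in => /existsP [v /andP [vS]]; rewrite -ltnNge => lt2.
have nbrs := identifiable_lonely_nbrs e_sym e_irr HS ident vS lt2.
right; exists v => //; split=> [w /nbrs []|w /nbrs []|] //.
have [m mM] : exists m, m \in M by apply/card_gt0P; exact: leq_trans M2.
apply/eqP; rewrite eqn_leq -ltnS lt2 /=.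
exact: (identifiable_lonely_gt0 e_sym e_irr HS ident vS lt2 mM (e_conn v m)).
Qed.
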